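(* Let $X$ be a complex Hilbert space with inner product $(\cdot,\cdot)_X$ and norm $\|\cdot\|_X$. Let $\mathbb{U}\ni\boldsymbol y\mapsto f(\boldsymbol y)\in X$ be $(\boldsymbol b,p,\varepsilon)$-holomorphic and continuous when $\mathbb{U}$ is equipped with the product topology. Then the map $\mathbb{U}\ni\boldsymbol y\mapsto\|f(\boldsymbol y)\|_X^2\in\mathbb{R}$ is $(\boldsymbol b,p,\varepsilon)$-holomorphic and continuous with the same $\boldsymbol b\in\ell^p(\mathbb{N})$, $p\in(0,1)$ and $\varepsilon>0$.
   Context: $\mathbb{U}=[-1,1]^{\mathbb{N}}$. For $s>1$ let $\mathcal{E}_s=\{(z+z^{-1})/2: z\in\mathbb{C},\ 1\le|z|\le s\}$; for a sequence $\boldsymbol\rho=(\rho_j)_{j\ge1}$ with $\rho_j>1$ let $\mathcal{E}_{\boldsymbol\rho}=\bigotimes_{j\ge1}\mathcal{E}_{\rho_j}$ and $\mathcal{O}_{\boldsymbol\rho}=\bigotimes_{j\ge1}\mathcal{O}_{\rho_j}$ with $\mathcal{O}_{\rho}=\{z\in\mathbb{C}:\operatorname{dist}(z,[-1,1])<\rho-1\}$. For a complex Banach space $Y$, $\boldsymbol b\in\ell^p(\mathbb{N})$ with $p\in(0,1)$ (nonincreasing) and $\varepsilon>0$, a map $g:\mathbb{U}\to Y$ is $(\boldsymbol b,p,\varepsilon)$-holomorphic if: (1) it is uniformly bounded on $\mathbb{U}$; (2) for every sequence $\boldsymbol\rho$ of numbers strictly larger than one with $\sum_{j\ge1}(\rho_j-1)b_j\le\varepsilon$,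 $g$ admits an extension $\boldsymbol z\mapsto g(\boldsymbol z)$ to $\mathcal{O}_{\boldsymbol\rho}$ that is holomorphic with respect to each variable $z_j$; (3) there is $C_\varepsilon>0$ with $\sup_{\boldsymbol z\in\mathcal{E}_{\boldsymbol\rho}}\|g(\boldsymbol z)\|_Y\le C_\varepsilon$. For real-valued maps, $Y=\mathbb{C}$ is used for the extension. *)

From HB Require Import structures.
From mathcomp Require Import all_boot all_order all_algebra.
From mathcomp Require Import all_classical all_reals all_analysis.
From mathcomp Require Import complex.
Import Order.TTheory GRing.Theory Num.Theory ComplexField.
Import numFieldNormedType.Exports.

Set Implicit Arguments.
Unset Strict Implicit.
Unset Printing Implicit Defensive.

Local Open Scope classical_set_scope.
Local Open Scope ring_scope.

Section BPE.
Variable R : realType.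
Local Notation C := R[i].

(* U = [-1,1]^N ; sequences are indexed from 0 (j = 0 plays the role of j = 1) *)
Definition cubeU : set (nat -> R) := [set y | forall j, -1 <= y j <= 1].

Definition cplx (y : nat -> R) : nat -> C := fun j => (y j)%:C%C.

Definition bernstein (s : R) : set C :=
  [set (z + z^-1) / 2 | z in [set z : C | 1 <= Normc.normc z <= s]].

Definition dist_seg (z : C) : R :=
  inf [set Normc.normc (z - t%:C%C) | t in [set t : R | -1 <= t <= 1]].

Definition Oset (r : R) : set C := [set z | dist_seg z < r - 1].

Definition prodset (S : R -> set C) (rho : nat -> R) : set (nat -> C) :=
  [set z | forall j, S (rho j) (z j)].

Definition updseq (z : nat -> C) (j : nat) (w : C) : nat -> C :=
  fun k => if k == j then w else z k.

Definition sep_holomorphic (Y : normedModType C) (O : set (nat -> C))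
    (F : (nat -> C) -> Y) : Prop :=
  forall z, O z -> forall j : nat,
    derivable (fun w : C^o => F (updseq z j w)) (z j) 1.

Definition admissible (b : nat -> R) (eps : R) (rho : nat -> R) : Prop :=
  (forall j, 1 < rho j) /\
  (\sum_(0 <= j <oo) ((rho j - 1) * b j)%:E <= eps%:E)%E.

(* (b,p,eps)-holomorphy of a Y-valued map (Y a complex Banach space);
   p only enters through the standing assumption b \in l^p, p in (0,1). *)
Definition bpe_holomorphic (Y : normedModType C) (b : nat -> R) (p eps : R)
    (g : (nat -> R) -> Y) : Prop :=
  (exists M : R, forall y, cubeU y -> `|g y| <= M%:C%C) /\
  exists2 Ce : R, 0 < Ce &
    forall rho, admissible b eps rho ->
      exists F : (nat -> C) -> Y,
        [/\ forall y, cubeU y -> F (cplx y) = g y,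
            sep_holomorphic (prodset Oset rho) F &
            forall z, prodset bernstein rho z -> `|F z| <= Ce%:C%C].

Definition bpe_holomorphic_real (b : nat -> R) (p eps : R)
    (g : (nat -> R) -> R) : Prop :=
  bpe_holomorphic (Y := C^o) b p eps (fun y => (g y)%:C%C).

End BPE.

From HB Require Import structures.
From mathcomp Require Import all_boot all_order all_algebra.
From mathcomp Require Import all_classical all_reals all_analysis.
From mathcomp Require Import complex.
From mathcomp Require Import ring.
Import Order.TTheory GRing.Theory Num.Theory ComplexField.
Import numFieldNormedType.Exports.
Local Open Scope classical_set_scope.
Local Open Scope ring_scope.

(* If F extends f holomorphically in each variable to O_rho and is bounded by C
   on E_rho, then z |-> (F z, F (conj z))_X extends |f|^2: it equals |f y|^2 at
   real y, it is holomorphic in each z_j because the inner product is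
   antilinear in its second argument and z_j |-> F (conj z) is antiholomorphic,
   and it is bounded by C^2 on E_rho by Cauchy-Schwarz, since O_rho and E_rho
   are invariant under conjugation. *)

Section ComplexTopology.
Context {R : realType}.
Local Notation C := R[i].

Lemma continuous_conjC : continuous (fun z : C^o => z^* : C^o).
Proof.
move=> z; apply/(@cvgrPdist_lt _ C^o _ (nbhs z) _) => e e0; near=> w.
rewrite -rmorphB norm_conjC; near: w.
by apply: cvgr_dist_lt e0; exact: cvg_id.
Unshelve. all: by end_near. Qed.

Lemma conjC_dnbhs (a : C^o) : (fun z : C^o => z^* : C^o) @ a^' --> (a^* : C^o)^'.
Proof.
move=> P aP; have {}aP := continuous_conjC a _ aP.
change (\forall z \near a, z != a -> P z^*).
near=> z => za; suff : z^* != a^* -> P z^* by apply; rewrite (inj_eq (can_inj conjCK)).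
by near: z.
Unshelve. all: by end_near. Qed.

Lemma continuous_Re : continuous (@complex.Re R : C^o -> R).
Proof.
move=> z; apply/(@cvgrPdist_lt _ R _ (nbhs z) _) => e e0; near=> w.
rewrite -raddfB -ltcR; apply: le_lt_trans (normc_ge_Re _) _; near: w.
have e0' : 0 < e%:C%C :> C by rewrite ltcR.
exact: (@cvgr_dist_lt _ C^o _ (nbhs z) _ id z cvg_id _ e0').
Unshelve. all: by end_near. Qed.

Lemma ger0_Re (c : C) : 0 <= c -> (complex.Re c)%:C%C = c.
Proof. by move=> c0; apply: RRe_real; exact: ger0_real. Qed.

Lemma continuous_Re_sqr_norm {T : topologicalType} {V : normedModType C}
    (A : set T) (f : T -> V) :
  {within A, continuous f} -> {within A, continuous (fun y => complex.Re (`|f y| ^+ 2))}.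
Proof.
move=> fc y.
apply: (cvg_comp (fun y => `|f y| ^+ 2) (@complex.Re R) _ (continuous_Re _)).
have fy2 := cvgM (cvg_norm (fc y)) (cvg_norm (fc y)); exact: (fy2 _ _ _).
Qed.

End ComplexTopology.

Section ConjugateSequence.
Context {R : realType}.
Local Notation C := R[i].

Lemma conjC_real_complex (t : R) : (t%:C%C : C)^* = t%:C%C.
Proof. exact: conjc_real. Qed.

Definition conjs (z : nat -> C) : nat -> C := fun j => (z j)^*.

Lemma normc_conjC (x : C) : Normc.normc x^* = Normc.normc x.
Proof. by case: x => a b; rewrite /Normc.normc /= sqrrN. Qed.

Lemma dist_seg_conjC (w : C) : dist_seg w^* = dist_seg w.
Proof.
rewrite /dist_seg; congr inf; apply/seteqP; split => _ [t ht <-]; exists t => //.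
  by rewrite -normc_conjC rmorphB /= conjC_real_complex.
by rewrite -[in RHS]normc_conjC rmorphB /= conjC_real_complex.
Qed.

Lemma prodset_Oset_conjs {rho z} :
  prodset (@Oset R) rho z -> prodset (@Oset R) rho (conjs z).
Proof. by move=> Oz j; rewrite /Oset /conjs /= dist_seg_conjC; apply: Oz. Qed.

Lemma prodset_bernstein_conjs {rho z} :
  prodset (@bernstein R) rho z -> prodset (@bernstein R) rho (conjs z).
Proof.
move=> Ez j; rewrite /conjs; have [u hu <-] := Ez j.
exists u^*; first by rewrite /= normc_conjC.
by rewrite rmorphM rmorphD !fmorphV /= conjC_nat.
Qed.

Lemma conjs_updseq z j (w : C) : conjs (updseq z j w) = updseq (conjs z) j w^*.
Proof. by apply: funext => k; rewrite /conjs /updseq; case: eqP. Qed.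

Lemma conjs_cplx y : conjs (cplx y : nat -> C) = cplx y.
Proof. by apply: funext => k; rewrite /conjs /cplx conjC_real_complex. Qed.

End ConjugateSequence.

Lemma derivable1_cvg {K : numFieldType} {V : normedModType K}
    {f : K^o -> V} {a : K^o} :
  derivable f a 1 -> (fun h : K^o => h^-1 *: (f (h + a) - f a)) @ 0^' --> 'D_1 f a.
Proof.
move=> df; suff -> : (fun h : K^o => h^-1 *: (f (h + a) - f a)) =
    (fun h => h^-1 *: ((f \o shift a) (h *: 1) - f a)) by exact: df.
by apply: funext => h /=; rewrite [h *: 1]mulr1.
Qed.

Section InnerProduct.
Variables (R : realType) (X : normedModType R[i]) (ip : X -> X -> R[i]).
Hypothesis ip_linear : forall (a : R[i]) (x x' y : X),
  ip (a *: x + x') y = a * ip x y + ip x' y.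
Hypothesis ip_herm : forall x y : X, ip x y = (ip y x)^*.
Hypothesis ip_norm : forall x : X, `|x| ^+ 2 = ip x x.

Lemma ipBl x x' y : ip (x - x') y = ip x y - ip x' y.
Proof. by rewrite addrC -scaleN1r ip_linear mulN1r addrC. Qed.

Lemma ip0l y : ip 0 y = 0.
Proof. by rewrite -(subrr (0 : X)) ipBl subrr. Qed.

Lemma ipZl a x y : ip (a *: x) y = a * ip x y.
Proof. by rewrite -[a *: x]addr0 ip_linear ip0l addr0. Qed.

Lemma ipBr x y y' : ip x (y - y') = ip x y - ip x y'.
Proof. by rewrite ip_herm ipBl rmorphB /= -!ip_herm. Qed.

Lemma ip0r x : ip x 0 = 0.
Proof. by rewrite -(subrr (0 : X)) ipBr subrr. Qed.

Lemma ipZr a x y : ip x (a *: y) = a^* * ip x y.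
Proof. by rewrite ip_herm ipZl rmorphM /= -ip_herm. Qed.

Lemma norm_ip_le x y : `|ip x y| <= `|x| * `|y|.
Proof.
have [->|y0] := eqVneq y 0; first by rewrite ip0r !normr0 mulr0.
set a := ip x y; set n := ip y y.
have n0 : 0 < n by rewrite /n -ip_norm exprn_gt0 // normr_gt0.
have nr : n^* = n by apply: conj_Creal; exact: gtr0_real.
have projE : ip (x - (a / n) *: y) (x - (a / n) *: y) = ip x x - a * a^* / n.
  rewrite ipBl !ipBr !ipZl !ipZr -/a -/n rmorphM fmorphV /= nr.
  rewrite [ip y x]ip_herm -/a.
  by field; rewrite gt_eqF.
have proj_ge0 : 0 <= ip x x - a * a^* / n by rewrite -projE -ip_norm exprn_ge0.
have : `|a| ^+ 2 <= (`|x| * `|y|) ^+ 2.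
  rewrite normCK exprMn ip_norm ip_norm -/n.
  rewrite -(@ler_pM2r _ (n^-1)) ?invr_gt0 // mulfK ?gt_eqF //.
  by rewrite -subr_ge0.
by rewrite ler_pXn2r // nnegrE ?mulr_ge0.
Qed.

Lemma cvg_ip {T : Type} {F : set_system T} {FF : Filter F} {u v : T -> X} {u0 v0 : X} :
  u @ F --> u0 -> v @ F --> v0 ->
  (fun t => ip (u t) (v t) : R[i]^o) @ F --> (ip u0 v0 : R[i]^o).
Proof.
move=> cu cv; apply: cvg_zero; apply/cvgr0Pnorm_lt => e e0.
pose k t : R[i]^o := `|u t - u0| * `|v t| + `|u0| * `|v t - v0|.
have k0 : k @ F --> (0 : R[i]^o).
  have du : `|u t - u0| @[t --> F] --> (0 : R[i]^o).
    by have := cvg_norm (cvgB cu (cvg_cst u0)); rewrite subrr normr0; apply.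
  have dv : `|v t - v0| @[t --> F] --> (0 : R[i]^o).
    by have := cvg_norm (cvgB cv (cvg_cst v0)); rewrite subrr normr0; apply.
  have := cvgD (cvgM du (cvg_norm cv)) (cvgM (cvg_cst (`|u0| : R[i]^o)) dv).
  by rewrite mul0r mulr0 addr0; apply.
near=> t; rewrite !fctE /=.
have -> : ip (u t) (v t) - ip u0 v0 = ip (u t - u0) (v t) + ip u0 (v t - v0).
  by rewrite ipBl ipBr addrA subrK.
apply: le_lt_trans (ler_normD _ _) _.
apply: le_lt_trans (lerD (norm_ip_le _ _) (norm_ip_le _ _)) _.
near: t; apply: filterS (cvgr0_norm_lt _ k0 _ e0) => t.
by rewrite ger0_norm // addr_ge0 // mulr_ge0.
Unshelve. all: by end_near. Qed.

Lemma derivable_ip_conj (A H : R[i]^o -> X) (a : R[i]^o) :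
  derivable A a 1 -> derivable H a^* 1 ->
  derivable (fun w : R[i]^o => ip (A w) (H w^*) : R[i]^o) a 1.
Proof.
move=> dA dH.
pose DH (k : R[i]^o) := k^-1 *: (H (k + a^*) - H a^*).
have cDH : (fun h => DH h^*) @ 0^' --> 'D_1 H a^*.
  have c := conjC_dnbhs (0 : R[i]^o); rewrite conjC0 in c.
  exact: (cvg_comp (fun h : R[i]^o => h^*) DH c (derivable1_cvg dH)).
have cHa : (fun h : R[i]^o => H (h + a)^*) @ 0^' --> H a^*.
  have ta : (fun h : R[i]^o => h + a) @ 0^' --> a.
    by rewrite -[X in _ --> X]add0r; apply: cvgD; [exact: cvg_within | exact: cvg_cst].
  have Hc := differentiable_continuous ((derivable1_diffP _ _).1 dH).
  exact: (cvg_comp _ _ (cvg_comp _ _ ta (continuous_conjC a)) Hc).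
apply/cvg_ex; exists (ip ('D_1 A a) (H a^*) + ip (A a) ('D_1 H a^*)).
apply: cvg_trans _ (cvgD (cvg_ip (derivable1_cvg dA) cHa) (cvg_ip (cvg_cst (A a)) cDH)).
(* By antilinearity, ip (A a) (DH (conj h)) is h^-1 times the increment of
   ip (A a) (H (conj w)) at a. *)
apply: near_eq_cvg; apply: nearW => h /=.
rewrite /DH [h%:A]mulr1 fctE /= rmorphD /= ipZl ipBl ipZr ipBr fmorphV /= conjCK.
by rewrite -mulrDr addrA subrK.
Qed.

Lemma sep_holomorphic_ip_conjs (rho : nat -> R) (F : (nat -> R[i]) -> X) :
  sep_holomorphic (prodset (@Oset R) rho) F ->
  sep_holomorphic (Y := R[i]^o) (prodset (@Oset R) rho)
    (fun z => ip (F z) (F (conjs z))).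
Proof.
move=> Fhol z Oz j; under eq_fun do rewrite conjs_updseq.
apply: (@derivable_ip_conj (fun w => F (updseq z j w)) (fun w => F (updseq (conjs z) j w))).
  exact: Fhol.
exact: (Fhol _ (prodset_Oset_conjs Oz) j).
Qed.

Lemma bpe_holomorphic_sqr_norm (b : nat -> R) (p eps : R) (f : (nat -> R) -> X) :
  bpe_holomorphic b p eps f ->
  bpe_holomorphic_real b p eps (fun y => complex.Re (`|f y| ^+ 2)).
Proof.
move=> [[M fM] [Ce Ce0 ext]]; split.
  exists (M ^+ 2) => y Uy.
  rewrite ger0_Re ?exprn_ge0 // normrX normr_id rmorphXn.
  by have fyM := fM y Uy; rewrite ler_pXn2r ?nnegrE ?(le_trans _ fyM).
exists (Ce ^+ 2); first exact: exprn_gt0.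
move=> rho /ext[F [Fext Fhol Fbd]].
exists (fun z => ip (F z) (F (conjs z))); split.
- by move=> y Uy; rewrite conjs_cplx Fext // ger0_Re ?exprn_ge0 // ip_norm.
- exact: sep_holomorphic_ip_conjs.
- move=> z Ez; apply: le_trans (norm_ip_le _ _) _.
  rewrite rmorphXn expr2; apply: ler_pM => //; first exact: Fbd.
  exact: Fbd _ (prodset_bernstein_conjs Ez).
Qed.

End InnerProduct.

Theorem lemmaA1 (R : realType)
  (X : completeNormedModType R[i]) (ip : X -> X -> R[i])
  (ip_linear : forall (a : R[i]) (x x' y : X),
      ip (a *: x + x') y = a * ip x y + ip x' y)
  (ip_herm : forall x y : X, ip x y = (ip y x)^*)
  (ip_norm : forall x : X, `|x| ^+ 2 = ip x x)
  (b : nat -> R) (p eps : R)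
  (hp : 0 < p < 1) (heps : 0 < eps)
  (hb_noninc : forall j, b j.+1 <= b j)
  (hb_lp : (\sum_(0 <= j <oo) (`|b j| `^ p)%:E < +oo)%E)
  (f : {ptws nat -> R} -> X)
  (hf : bpe_holomorphic b p eps f)
  (hfc : {within (@cubeU R : set {ptws nat -> R}), continuous f}) :
  bpe_holomorphic_real b p eps (fun y => complex.Re (`|f y| ^+ 2)) /\
  {within (@cubeU R : set {ptws nat -> R}), continuous (fun y : {ptws nat -> R} => complex.Re (`|f y| ^+ 2))}.
Proof.
split; first exact: bpe_holomorphic_sqr_norm ip_linear ip_herm ip_norm _ _ _ _ hf.
exact: continuous_Re_sqr_norm.
Qed.
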